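(* Let $u\in\{A,B,C\}^{\mathbb N}$ be a 3iet word with parameters $\varepsilon,\ell$, and let $\varepsilon=[0,a_1,a_2,\dots]$ be the continued fraction expansion of $\varepsilon$. Then $$ {\rm ind}(u)<+\infty \qquad\iff\qquad \sup_{n\in\mathbb N} a_n < +\infty\,. $$
   Context: Parameters $\varepsilon,\ell$ satisfy $\varepsilon\in(0,1)\setminus\mathbb Q$ and $\max\{\varepsilon,1-\varepsilon\}<\ell<1$. The three interval exchange $T_{\varepsilon,\ell}:[0,\ell)\to[0,\ell)$ is defined by $T_{\varepsilon,\ell}(x)=x+1-\varepsilon$ for $x\in I_A:=[0,\ell-1+\varepsilon)$, $T_{\varepsilon,\ell}(x)=x+1-2\varepsilon$ for $x\in I_B:=[\ell-1+\varepsilon,\varepsilon)$, and $T_{\varepsilon,\ell}(x)=x-\varepsilon$ for $x\in I_C:=[\varepsilon,\ell)$. A 3iet word with parameters $\varepsilon,\ell$ is the word $u=(u_n)_{n\in\mathbb N}$ over $\{A,B,C\}$ with $u_n=X$ iff $T_{\varepsilon,\ell}^n(x_0)\in I_X$, for some $x_0\in[0,\ell)$; its language and index do not depend on $x_0$. A word $v$ is a power $w^r$ ($r=|v|/|w|$) if $|v|\ge|w|$ and $v$ is a prefix of $www\cdots$; ${\rm ind}(w)=\sup\{r\in\mathbb Q: w^r \text{ is a factor of } u\}$ and ${\rm ind}(u)=\sup\{{\rm ind}(w): w \text{ a factor of } u\}$. *)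

From Stdlib Require Import Reals Lra Lia List QArith.
From Coquelicot Require Import Coquelicot.
Open Scope R_scope.

Inductive letter := LA | LB | LC.

Definition T3 (eps l x : R) : R :=
  if Rlt_dec x (l - 1 + eps) then x + 1 - eps
  else if Rlt_dec x eps then x + 1 - 2 * eps
  else x - eps.

Definition code (eps l x : R) : letter :=
  if Rlt_dec x (l - 1 + eps) then LA
  else if Rlt_dec x eps then LB
  else LC.

Definition iet3_word (eps l x0 : R) (n : nat) : letter :=
  code eps l (Nat.iter n (T3 eps l) x0).

Definition factor (u : nat -> letter) (v : list letter) : Prop :=
  exists i : nat, forall k : nat, (k < length v)%nat -> nth k v LA = u (i + k)%nat.

(* v is a power w^r of the (nonempty) word w: |v| >= |w| and v is a prefix of www... *)
Definition is_power (v w : list letter) : Prop :=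
  w <> nil /\ (length w <= length v)%nat /\
  forall k : nat, (k < length v)%nat -> nth k v LA = nth (k mod length w) w LA.

(* ind(w) = sup { r in Q : w^r is a factor of u }  (r = |v|/|w|). *)
Definition ind_factor (u : nat -> letter) (w : list letter) : Rbar :=
  Lub_Rbar (fun r => exists v, factor u v /\ is_power v w /\
                     r = INR (length v) / INR (length w)).

(* ind(u) = sup { ind(w) : w a (nonempty) factor of u }, written as the
   supremum of the union of the sets defining each ind(w). *)
Definition ind_word (u : nat -> letter) : Rbar :=
  Lub_Rbar (fun r => exists w v, w <> nil /\ factor u w /\ factor u v /\
                     is_power v w /\ r = INR (length v) / INR (length w)).

(* Gauss map and continued fraction partial quotients:
   eps = [0; a_1, a_2, ...], a_{n+1} = floor (1 / G^n eps). *)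
Definition gauss (x : R) : R := / x - IZR (Int_part (/ x)).

Definition cf_digit (eps : R) (n : nat) : Z :=
  match n with
  | O => 0%Z
  | S m => Int_part (/ Nat.iter m gauss eps)
  end.

Definition irrational (x : R) : Prop := ~ exists q : Q, Q2R q = x.

(* T_{eps,l} is the map induced on [0, l) by the rotation x |-> x - eps (mod 1).  A factor
   w^r of u with |w| = p, read along the orbit of y, says that z = T^p y is a rotation image
   y - k eps (mod 1) with p <= k <= 2p, and that the rotation orbits of y and z cross the same
   discontinuities for about r p steps, so that no multiple j eps with j <~ r p separates y
   from z modulo 1.
   If the partial quotients are bounded by M, then |z - y| >~ 1/(M^2 p) by bad
   approximability, while the multiples j eps, j <= K, leave no gap longer than ~ M/K; hence
   r = O(M^3).
   If a_(n+1) is large, then |q_n eps - p_n| < 1/(a_(n+1) q_n).  On a window of length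
   1/(32 q_n) avoiding the discontinuities of the first q_n rotation steps, some power of T
   is the translation by p_n - q_n eps and does not change the coding; a T-orbit entering
   the window then yields a power of exponent about a_(n+1)/64. *)

From Stdlib Require Import Reals ZArith.
From Coquelicot Require Import Coquelicot.
From Stdlib Require Import Lra Lia List Classical Qreals.
Open Scope R_scope.

Lemma Int_part_eq (t : R) (m : Z) : IZR m <= t < IZR m + 1 -> Int_part t = m.
Proof.
  intros [H1 H2]. unfold Int_part.
  assert (Hu : (m + 1)%Z = up t) by (apply tech_up; rewrite plus_IZR; simpl; lra).
  lia.
Qed.

Lemma frac_part_eq (t s : R) (m : Z) : t = s + IZR m -> 0 <= s < 1 -> frac_part t = s.
Proof.
  intros Ht Hs. unfold frac_part. rewrite (Int_part_eq t m) by lra. lra.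
Qed.

Lemma frac_part_bounds (t : R) : 0 <= frac_part t < 1.
Proof. destruct (base_fp t); lra. Qed.

Lemma frac_part_plus_IZR (t : R) (m : Z) : frac_part (t + IZR m) = frac_part t.
Proof.
  apply frac_part_eq with (Int_part t + m)%Z; [|apply frac_part_bounds].
  rewrite plus_IZR. unfold frac_part. ring.
Qed.

Lemma frac_part_small (t : R) : 0 <= t < 1 -> frac_part t = t.
Proof. intros H. apply frac_part_eq with 0%Z; simpl; lra. Qed.

Lemma Rabs_IZR_ge_1 (z : Z) : z <> 0%Z -> 1 <= Rabs (IZR z).
Proof. intros Hz. rewrite <- abs_IZR. apply IZR_le. lia. Qed.

Lemma Q2R_inject_Z (z : Z) : Q2R (inject_Z z) = IZR z.
Proof. unfold Q2R, inject_Z; simpl. lra. Qed.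

Lemma irrational_neq_0 (x : R) : irrational x -> x <> 0.
Proof. intros Hx ->. apply Hx. exists 0%Q. unfold Q2R; simpl. lra. Qed.

Lemma gauss_irrational (x : R) : irrational x -> irrational (gauss x).
Proof.
  intros Hx [q Hq]. unfold gauss in Hq.
  assert (Hx0 := irrational_neq_0 x Hx).
  assert (Hinv : / x = Q2R (q + inject_Z (Int_part (/ x)))).
  { rewrite Q2R_plus, Q2R_inject_Z, Hq. ring. }
  destruct (Qeq_dec (q + inject_Z (Int_part (/ x))) 0) as [H0|H0].
  - apply Qeq_eqR in H0. rewrite <- Hinv in H0.
    apply (Rinv_neq_0_compat x Hx0). rewrite H0. unfold Q2R; simpl. lra.
  - apply Hx. exists (/ (q + inject_Z (Int_part (/ x))))%Q.
    rewrite Q2R_inv, <- Hinv by exact H0. apply Rinv_inv.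
Qed.

Lemma iet3_word_add eps l x0 i j :
  iet3_word eps l x0 (i + j) = code eps l (Nat.iter j (T3 eps l) (Nat.iter i (T3 eps l) x0)).
Proof. unfold iet3_word. now rewrite Nat.add_comm, Nat.iter_add. Qed.

Lemma power_factor_periodic (u : nat -> letter) v w i :
  (forall k, (k < length v)%nat -> nth k v LA = u (i + k)%nat) -> is_power v w ->
  forall k, (k + length w < length v)%nat -> u (i + k)%nat = u (i + (k + length w))%nat.
Proof.
  intros Hv [_ [_ Hpow]] k Hk.
  rewrite <- !Hv, !Hpow by lia.
  replace (k + length w)%nat with (k + 1 * length w)%nat by lia.
  now rewrite Nat.Div0.mod_add.
Qed.

Lemma nth_map_seq_0 (f : nat -> letter) n k : (k < n)%nat -> nth k (map f (seq 0 n)) LA = f k.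
Proof.
  intros H. rewrite (nth_indep _ LA (f 0%nat)) by (now rewrite length_map, length_seq).
  rewrite map_nth, seq_nth by assumption. reflexivity.
Qed.

Lemma periodic_block_power (u : nat -> letter) i0 p L : (1 <= p)%nat ->
  (forall m j, (m <= L)%nat -> (j < p)%nat -> u (i0 + (m * p + j))%nat = u (i0 + j)%nat) ->
  exists w v, w <> nil /\ factor u w /\ factor u v /\ is_power v w /\
    INR (length v) / INR (length w) = INR (S L).
Proof.
  intros Hp Hu.
  set (f := fun k => u (i0 + k)%nat).
  exists (map f (seq 0 p)), (map f (seq 0 (S L * p))).
  assert (Hnil : map f (seq 0 p) <> nil) by (destruct p; [lia|discriminate]).
  split; [exact Hnil|]. split; [|split; [|split]].
  - exists i0. intros k Hk. rewrite length_map, length_seq in Hk. now rewrite nth_map_seq_0.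
  - exists i0. intros k Hk. rewrite length_map, length_seq in Hk. now rewrite nth_map_seq_0.
  - split; [exact Hnil|]. rewrite !length_map, !length_seq. split; [nia|].
    intros k Hk.
    assert (Hm := Nat.mod_upper_bound k p ltac:(lia)).
    rewrite !nth_map_seq_0 by (auto; nia). unfold f.
    rewrite (Nat.div_mod_eq k p) at 1. rewrite (Nat.mul_comm p).
    apply Hu; [|exact Hm].
    enough (k / p < S L)%nat by lia. apply Nat.Div0.div_lt_upper_bound; lia.
  - rewrite !length_map, !length_seq, mult_INR. field. apply not_0_INR. lia.
Qed.

Lemma pigeonhole_rel (m n : nat) (Rel : nat -> nat -> Prop) :
  (forall i, (i < n)%nat -> exists j, (j < m)%nat /\ Rel i j) ->
  (forall i i' j, (i < n)%nat -> (i' < n)%nat -> Rel i j -> Rel i' j -> i = i') ->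
  (n <= m)%nat.
Proof.
  revert n Rel. induction m as [|m IH]; intros n Rel Hex Hinj.
  - destruct n as [|n]; [lia|]. destruct (Hex 0%nat ltac:(lia)) as [j [Hj _]]. lia.
  - destruct (classic (exists i0, (i0 < n)%nat /\ Rel i0 m)) as [[i0 [Hi0 Hr0]]|Hno].
    + (* remove the unique preimage i0 of m and renumber the others *)
      set (sh := fun i => if Nat.ltb i i0 then i else S i).
      assert (Hsh : forall i, (i < n - 1)%nat -> (sh i < n)%nat /\ sh i <> i0)
        by (intros i Hi; unfold sh; destruct (Nat.ltb_spec i i0); lia).
      assert (Hshi : forall i i', sh i = sh i' -> i = i')
        by (intros i i'; unfold sh; destruct (Nat.ltb_spec i i0), (Nat.ltb_spec i' i0); lia).
      enough (n - 1 <= m)%nat by lia.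
      apply (IH (n - 1)%nat (fun i j => Rel (sh i) j)).
      * intros i Hi. destruct (Hsh i Hi) as [Hs1 Hs2].
        destruct (Hex (sh i) Hs1) as [j [Hj Hr]].
        exists j. split; [|exact Hr].
        destruct (Nat.eq_dec j m) as [->|]; [|lia].
        exfalso. apply Hs2. now apply (Hinj _ _ m).
      * intros i i' j Hi Hi' Hr Hr'. apply Hshi.
        apply (Hinj _ _ j); auto; now apply Hsh.
    + enough (n <= m)%nat by lia.
      apply (IH n Rel); [|exact Hinj].
      intros i Hi. destruct (Hex i Hi) as [j [Hj Hr]]. exists j. split; [|exact Hr].
      destruct (Nat.eq_dec j m) as [->|]; [|lia].
      exfalso. apply Hno. now exists i.
Qed.

Lemma ind_word_finite (u : nat -> letter) (C : R) :
  (forall w v, w <> nil -> factor u v -> is_power v w -> INR (length v) <= C * INR (length w)) ->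
  Rbar_lt (ind_word u) p_infty.
Proof.
  intros HC. unfold ind_word.
  match goal with |- Rbar_lt (Lub_Rbar ?E) _ =>
    assert (Hle : Rbar_le (Lub_Rbar E) C) end.
  { apply Lub_Rbar_correct. intros r (w & v & Hw & _ & Hv & Hp & ->). simpl.
    apply Rle_div_l; [|now apply HC].
    destruct w; [congruence|]. apply lt_0_INR. simpl. lia. }
  destruct (Lub_Rbar _); easy.
Qed.

Lemma ind_word_infinite (u : nat -> letter) :
  (forall L : nat, exists w v, w <> nil /\ factor u w /\ factor u v /\ is_power v w /\
     INR (length v) / INR (length w) = INR (S L)) ->
  ind_word u = p_infty.
Proof.
  intros Hpow. unfold ind_word.
  match goal with |- Lub_Rbar ?E = _ =>
    assert (Hge : forall L : nat, Rbar_le (INR (S L)) (Lub_Rbar E)) end.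
  { intros L. apply Lub_Rbar_correct.
    destruct (Hpow L) as (w & v & Hw & Hfw & Hfv & Hp & Hr). now exists w, v. }
  destruct (Lub_Rbar _) as [r| |]; [|reflexivity|destruct (Hge O)].
  destruct (INR_unbounded r) as [n Hn].
  assert (H := Hge n). rewrite S_INR in H. simpl in H. lra.
Qed.

Section IrrationalSlope.

Variable eps : R.

Definition cf_rem (n : nat) : R := Nat.iter n gauss eps.

(* [cf_den (S n)] and [cf_num (S n)] are the denominator q_n and the numerator p_n
   of the n-th convergent p_n/q_n of eps; index 0 holds q_(-1) = 0 and p_(-1) = 1. *)
Fixpoint cf_den (n : nat) : Z :=
  match n with
  | O => 0
  | S m => match m with O => 1 | S k => cf_digit eps (S k) * cf_den m + cf_den k end
  end%Z.

Fixpoint cf_num (n : nat) : Z :=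
  match n with
  | O => 1
  | S m => match m with O => 0 | S k => cf_digit eps (S k) * cf_num m + cf_num k end
  end%Z.

Definition cf_det (n : nat) : Z := (cf_num n * cf_den (S n) - cf_num (S n) * cf_den n)%Z.

Definition cf_err (n : nat) : R := IZR (cf_den (S n)) * eps - IZR (cf_num (S n)).

Lemma cf_den_SS n : cf_den (S (S n)) = (cf_digit eps (S n) * cf_den (S n) + cf_den n)%Z.
Proof. reflexivity. Qed.

Lemma cf_num_SS n : cf_num (S (S n)) = (cf_digit eps (S n) * cf_num (S n) + cf_num n)%Z.
Proof. reflexivity. Qed.

Lemma cf_det_pm n : cf_det n = 1%Z \/ cf_det n = (-1)%Z.
Proof.
  induction n as [|n IH]; [now left|].
  unfold cf_det in *. rewrite cf_den_SS, cf_num_SS.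
  destruct IH; [right|left]; nia.
Qed.

Lemma cf_rem_S_inv n : / cf_rem n = IZR (cf_digit eps (S n)) + cf_rem (S n).
Proof. unfold cf_rem; simpl; unfold gauss. ring. Qed.

Hypothesis eps_bounds : 0 < eps < 1.
Hypothesis eps_irrational : irrational eps.

Lemma cf_rem_irrational n : irrational (cf_rem n).
Proof.
  induction n as [|n IH]; [exact eps_irrational|].
  exact (gauss_irrational _ IH).
Qed.

Lemma cf_rem_bounds n : 0 < cf_rem n < 1.
Proof.
  assert (Hnz := irrational_neq_0 _ (cf_rem_irrational n)).
  destruct n as [|n]; [exact eps_bounds|].
  assert (H := frac_part_bounds (/ cf_rem n)).
  change (frac_part (/ cf_rem n)) with (cf_rem (S n)) in H. lra.
Qed.

Lemma cf_rem_S_inv_mul n : cf_rem n * (IZR (cf_digit eps (S n)) + cf_rem (S n)) = 1.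
Proof.
  rewrite <- cf_rem_S_inv. field. apply irrational_neq_0, cf_rem_irrational.
Qed.

Lemma cf_digit_pos n : (1 <= cf_digit eps (S n))%Z.
Proof.
  destruct (cf_rem_bounds n) as [H0 H1].
  assert (Hgt : 1 < / cf_rem n) by (rewrite <- Rinv_1; apply Rinv_lt_contravar; lra).
  destruct (base_Int_part (/ cf_rem n)) as [B1 B2].
  change (cf_digit eps (S n)) with (Int_part (/ cf_rem n)).
  assert (Hz : (0 < Int_part (/ cf_rem n))%Z) by (apply lt_IZR; lra).
  lia.
Qed.

Lemma cf_den_bounds n : (0 <= cf_den n <= cf_den (S n) /\ 1 <= cf_den (S n))%Z.
Proof.
  induction n as [|n IH]; [simpl; lia|].
  rewrite cf_den_SS. assert (Ha := cf_digit_pos n). nia.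
Qed.

Lemma cf_den_pos n : (1 <= cf_den (S n))%Z.
Proof. apply cf_den_bounds. Qed.

Lemma cf_den_step n : (cf_den (S n) + cf_den n <= cf_den (S (S n)))%Z.
Proof.
  rewrite cf_den_SS. assert (Ha := cf_digit_pos n). assert (Hq := cf_den_bounds n). nia.
Qed.

Lemma cf_den_ge_index n : (Z.of_nat n <= cf_den (S n))%Z.
Proof.
  induction n as [|n IH]; [simpl; lia|].
  assert (Hs := cf_den_step n). assert (Hq := cf_den_pos n).
  destruct n as [|n]; [simpl in *; lia|].
  assert (Hq' := cf_den_pos n). lia.
Qed.

Lemma cf_identity n :
  eps * (IZR (cf_den (S n)) + IZR (cf_den n) * cf_rem n)
  = IZR (cf_num (S n)) + IZR (cf_num n) * cf_rem n.
Proof.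
  induction n as [|n IH]; [simpl; unfold cf_rem; simpl; ring|].
  rewrite cf_den_SS, cf_num_SS, !plus_IZR, !mult_IZR.
  assert (H1 := cf_rem_S_inv_mul n).
  set (a := IZR (cf_digit eps (S n))) in *.
  set (t := cf_rem n) in *. set (t' := cf_rem (S n)) in *.
  apply Rminus_diag_uniq.
  replace (eps * (a * IZR (cf_den (S n)) + IZR (cf_den n) + IZR (cf_den (S n)) * t')
           - (a * IZR (cf_num (S n)) + IZR (cf_num n) + IZR (cf_num (S n)) * t')) with
    ((eps * (IZR (cf_den (S n)) + IZR (cf_den n) * t) - (IZR (cf_num (S n)) + IZR (cf_num n) * t))
       * (a + t')
     + (eps * IZR (cf_den n) - IZR (cf_num n)) * (1 - t * (a + t'))) by ring.
  rewrite IH, H1. ring.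
Qed.

Lemma cf_err_identity n :
  cf_err n * (IZR (cf_den (S (S n))) + IZR (cf_den (S n)) * cf_rem (S n)) = IZR (cf_det n).
Proof.
  assert (Hid := cf_identity n). assert (H1 := cf_rem_S_inv_mul n).
  unfold cf_err, cf_det. rewrite cf_den_SS, !minus_IZR, !plus_IZR, !mult_IZR.
  set (a := IZR (cf_digit eps (S n))) in *.
  set (t := cf_rem n) in *. set (t' := cf_rem (S n)) in *.
  set (Q1 := IZR (cf_den (S n))) in *. set (Q0 := IZR (cf_den n)) in *.
  set (P1 := IZR (cf_num (S n))) in *. set (P0 := IZR (cf_num n)) in *.
  apply Rminus_diag_uniq.
  replace ((Q1 * eps - P1) * (a * Q1 + Q0 + Q1 * t') - (P0 * Q1 - P1 * Q0)) with
    (Q1 * (eps * (Q1 + Q0 * t) - (P1 + P0 * t)) * (a + t')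
     + (P0 * Q1 - Q1 * eps * Q0) * (t * (a + t') - 1)) by ring.
  rewrite Hid, H1. ring.
Qed.

Lemma cf_err_lt n : Rabs (cf_err n) * IZR (cf_den (S (S n))) < 1.
Proof.
  assert (E := cf_err_identity n).
  assert (Hd : Rabs (IZR (cf_det n)) = 1).
  { rewrite <- abs_IZR. destruct (cf_det_pm n) as [-> | ->]; reflexivity. }
  assert (Ht := cf_rem_bounds (S n)).
  assert (Hq := cf_den_pos n). apply IZR_le in Hq.
  set (X := IZR (cf_den (S (S n))) + IZR (cf_den (S n)) * cf_rem (S n)) in *.
  assert (Hlt : IZR (cf_den (S (S n))) < X) by (unfold X; nra).
  assert (Hq2 := cf_den_pos (S n)). apply IZR_le in Hq2.
  assert (E2 : Rabs (cf_err n) * X = 1).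
  { rewrite <- Hd, <- E, Rabs_mult, (Rabs_right X) by lra. reflexivity. }
  assert (Ha := Rabs_pos (cf_err n)).
  destruct (Req_dec (Rabs (cf_err n)) 0) as [H0|H0]; [rewrite H0 in E2; lra|nra].
Qed.

(* As p_n is invertible modulo q_n, some j in [1, q_n] has j p_n = r (mod q_n) for the
   integer r nearest to B q_n; then j eps - B is within (1/2 + j |q_n eps - p_n|) / q_n
   of an integer. *)
Lemma multiple_near n B : exists (j : nat) (m : Z),
  (1 <= j)%nat /\ (Z.of_nat j <= cf_den (S n))%Z /\
  Rabs (INR j * eps - IZR m - B) * IZR (cf_den (S n)) < 3/2.
Proof.
  set (q := cf_den (S n)). set (p := cf_num (S n)).
  assert (Hq1 : (1 <= q)%Z) by apply cf_den_pos.
  set (r := Int_part (B * IZR q + /2)).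
  destruct (base_Int_part (B * IZR q + /2)) as [Hr1 Hr2]. fold r in Hr1, Hr2.
  set (D := cf_det n).
  assert (HDD : (D * D = 1)%Z) by (destruct (cf_det_pm n) as [H|H]; fold D in H; rewrite H; reflexivity).
  set (j0 := (- D * cf_den n * r)%Z).
  set (s := ((j0 - 1) / q)%Z).
  set (jz := (j0 - q * s)%Z).
  set (k := (- s * p - D * r * cf_num n)%Z).
  assert (Hdm := Z.div_mod (j0 - 1) q ltac:(lia)).
  assert (Hmb := Z.mod_pos_bound (j0 - 1) q ltac:(lia)).
  assert (Hjz : (1 <= jz <= q)%Z) by (unfold jz, s; lia).
  assert (Hkey : (jz * p = r + q * k)%Z).
  { assert (HD : D = (cf_num n * q - p * cf_den n)%Z) by reflexivity.
    assert (Hr : (D * r * D = r)%Z) by (rewrite <- Z.mul_assoc, (Z.mul_comm r D), Z.mul_assoc, HDD; ring).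
    unfold jz, k, j0. rewrite <- Hr at 2. rewrite HD at 2. ring. }
  exists (Z.to_nat jz), k. split; [lia|]. split; [lia|].
  rewrite INR_IZR_INZ, Z2Nat.id by lia.
  assert (Hkey' : IZR jz * IZR p = IZR r + IZR q * IZR k) by (rewrite <- !mult_IZR, <- plus_IZR; f_equal; exact Hkey).
  assert (HqR : 1 <= IZR q) by (apply IZR_le; lia).
  assert (Hjq : 1 <= IZR jz <= IZR q) by (split; apply IZR_le; lia).
  assert (HQ2 : IZR q <= IZR (cf_den (S (S n)))) by (apply IZR_le, cf_den_bounds).
  assert (Hform : (IZR jz * eps - IZR k - B) * IZR q = (IZR r - B * IZR q) + IZR jz * cf_err n)
    by (unfold cf_err; fold q p; lra).
  rewrite <- (Rabs_right (IZR q)) by lra. rewrite <- Rabs_mult, Hform.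
  eapply Rle_lt_trans; [apply Rabs_triang|].
  rewrite Rabs_mult, (Rabs_right (IZR jz)) by lra.
  assert (Rabs (IZR r - B * IZR q) <= /2) by (apply Rabs_le; lra).
  assert (Herr := cf_err_lt n). assert (Ha := Rabs_pos (cf_err n)).
  assert (IZR jz * Rabs (cf_err n) <= IZR (cf_den (S (S n))) * Rabs (cf_err n)) by nra.
  lra.
Qed.

Lemma cf_den_bracket (K : Z) : (1 <= K)%Z ->
  exists n, (cf_den (S n) <= K < cf_den (S (S n)))%Z.
Proof.
  intros HK.
  assert (Hbr : forall N, (K < cf_den (S N))%Z -> exists n, (cf_den (S n) <= K < cf_den (S (S n)))%Z).
  { induction N as [|N IH]; intros HN; [simpl in HN; lia|].
    destruct (Z_lt_le_dec K (cf_den (S N))) as [Hlt|Hle]; [now apply IH|].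
    now exists N. }
  apply (Hbr (S (Z.to_nat K))).
  assert (H := cf_den_ge_index (S (Z.to_nat K))). lia.
Qed.

Lemma multiple_not_convergent n (m k : Z) : (1 <= m < cf_den (S (S n)))%Z ->
  (m * cf_num (S (S n)) - k * cf_den (S (S n)) <> 0)%Z.
Proof.
  intros Hm H0.
  assert (Hx : (m * cf_det (S n) = cf_den (S (S n)) * (m * cf_num (S n) - k * cf_den (S n)))%Z).
  { assert (E : (m * cf_num (S (S n)) = k * cf_den (S (S n)))%Z) by lia.
    assert (E' := f_equal (Z.mul (cf_den (S n))) E). unfold cf_det. lia. }
  set (X := (m * cf_num (S n) - k * cf_den (S n))%Z) in Hx.
  assert (Hq := cf_den_pos (S n)).
  assert (Habs : (m = cf_den (S (S n)) * Z.abs X)%Z)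
    by (destruct (cf_det_pm (S n)) as [Hd|Hd]; rewrite Hd in Hx; nia).
  destruct (Z.eq_dec X 0); nia.
Qed.

Lemma multiple_dist_lower n (m : nat) (k : Z) :
  (cf_den (S n) <= Z.of_nat m < cf_den (S (S n)))%Z ->
  IZR (cf_den (S n)) < Rabs (INR m * eps - IZR k) * IZR (cf_den (S (S n)))
                        * (IZR (cf_den (S (S n))) + IZR (cf_den (S n))).
Proof.
  intros Hm.
  assert (Hq1 := cf_den_pos n).
  set (q := cf_den (S n)) in *. set (q' := cf_den (S (S n))) in *.
  set (N := (Z.of_nat m * cf_num (S (S n)) - k * q')%Z).
  set (x := Rabs (INR m * eps - IZR k)). set (E := Rabs (cf_err (S n))).
  assert (Hmz : INR m = IZR (Z.of_nat m)) by apply INR_IZR_INZ.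
  assert (Hmq : INR m + 1 <= IZR q') by (rewrite Hmz, <- plus_IZR; apply IZR_le; lia).
  assert (Hq : 1 <= IZR q) by (apply IZR_le; lia).
  assert (HE0 : 0 <= E) by apply Rabs_pos. assert (Hm0 := pos_INR m).
  assert (HE : E * (IZR q' + IZR q) < 1).
  { assert (Hs := cf_den_step (S n)). apply IZR_le in Hs. rewrite plus_IZR in Hs.
    assert (Hl := cf_err_lt (S n)). fold E q q' in Hl, Hs. nra. }
  assert (HN : 1 <= Rabs (IZR N)) by (apply Rabs_IZR_ge_1, multiple_not_convergent; lia).
  assert (Hx : x * IZR q' >= 1 - INR m * E).
  { assert (Hf : (INR m * eps - IZR k) * IZR q' = IZR N + INR m * cf_err (S n))
      by (unfold N, cf_err; rewrite minus_IZR, !mult_IZR, <- Hmz; fold q'; ring).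
    unfold x. rewrite <- (Rabs_right (IZR q')), <- Rabs_mult, Hf by lra.
    assert (Ht := Rabs_triang_inv (IZR N) (- (INR m * cf_err (S n)))).
    rewrite Rabs_Ropp, Rabs_mult, (Rabs_right (INR m)) in Ht by (apply Rle_ge, pos_INR).
    replace (IZR N - - (INR m * cf_err (S n))) with (IZR N + INR m * cf_err (S n)) in Ht by ring.
    fold E in Ht. lra. }
  nra.
Qed.

Section BoundedDigits.

Variable M : Z.
Hypothesis digits_bounded : forall n, (cf_digit eps n <= M)%Z.

Lemma digit_bound_ge_1 : 1 <= IZR M.
Proof.
  assert (H := digits_bounded 1). assert (Ha := cf_digit_pos 0). apply IZR_le. lia.
Qed.

Lemma cf_den_S_le n : (cf_den (S (S n)) <= (M + 1) * cf_den (S n))%Z.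
Proof.
  rewrite cf_den_SS. assert (Ha := digits_bounded (S n)).
  assert (Hq := cf_den_bounds n). assert (Ha1 := cf_digit_pos n). nia.
Qed.

Lemma badly_approximable (m : nat) (k : Z) : (1 <= m)%nat ->
  1 < Rabs (INR m * eps - IZR k) * ((IZR M + 1) * (IZR M + 2) * INR m).
Proof.
  intros Hm.
  destruct (cf_den_bracket (Z.of_nat m) ltac:(lia)) as [n Hn].
  assert (Hlow := multiple_dist_lower n m k Hn).
  set (q := IZR (cf_den (S n))) in *. set (q' := IZR (cf_den (S (S n)))) in *.
  set (x := Rabs (INR m * eps - IZR k)) in *.
  assert (Hq1 : 1 <= q) by (apply IZR_le, cf_den_pos).
  assert (Hqq : q <= q') by (apply IZR_le, cf_den_bounds).
  assert (HqM : q' <= (IZR M + 1) * q)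
    by (unfold q, q'; rewrite <- plus_IZR, <- mult_IZR; apply IZR_le, cf_den_S_le).
  assert (Hqm : q <= INR m) by (unfold q; rewrite INR_IZR_INZ; apply IZR_le; lia).
  assert (Hx0 : 0 <= x) by apply Rabs_pos.
  assert (HM := digit_bound_ge_1).
  assert (Hxq : x * ((IZR M + 1) * (IZR M + 2) * q) > 1).
  { assert (x * q' <= x * ((IZR M + 1) * q)) by nra.
    assert (0 <= x * q') by nra.
    assert (x * ((IZR M + 1) * q) * ((IZR M + 2) * q) > q) by nra.
    apply (Rmult_lt_reg_r q); [lra|]. nra. }
  assert (x * ((IZR M + 1) * (IZR M + 2) * q) <= x * ((IZR M + 1) * (IZR M + 2) * INR m))
    by (apply Rmult_le_compat_l; [|apply Rmult_le_compat_l]; nra).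
  lra.
Qed.

Lemma gap_bound (K : nat) (y y' : R) : (1 <= K)%nat -> y < y' ->
  (forall (j : nat) (m : Z), (1 <= j <= K)%nat -> ~ (y < INR j * eps - IZR m < y')) ->
  (y' - y) * INR K < 3 * (IZR M + 1).
Proof.
  intros HK Hy Hno.
  destruct (cf_den_bracket (Z.of_nat K) ltac:(lia)) as [n [Hn1 Hn2]].
  destruct (multiple_near n ((y + y') / 2)) as (j & m & Hj1 & Hj2 & Hjm).
  assert (Hq1 : 1 <= IZR (cf_den (S n))) by (apply IZR_le, cf_den_pos).
  assert (Hsm : (y' - y) * IZR (cf_den (S n)) < 3).
  { apply Rnot_le_lt. intros H. apply (Hno j m); [lia|].
    assert (Hr : Rabs (INR j * eps - IZR m - (y + y') / 2) < (y' - y) / 2)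
      by (apply (Rmult_lt_reg_r (IZR (cf_den (S n)))); lra).
    apply Rabs_def2 in Hr. lra. }
  assert (HK' : INR K < (IZR M + 1) * IZR (cf_den (S n))).
  { assert (HqM := cf_den_S_le n).
    rewrite INR_IZR_INZ, <- plus_IZR, <- mult_IZR. apply IZR_lt. lia. }
  assert (HM := digit_bound_ge_1). nra.
Qed.

End BoundedDigits.

Section InducedMap.

Variable l : R.
Hypothesis eps_lt_l : eps < l.
Hypothesis one_minus_eps_lt_l : 1 - eps < l.
Hypothesis l_lt_1 : l < 1.

Definition rot (k : nat) (x : R) : R := frac_part (x - INR k * eps).

(* T_{eps,l} is the map induced on [0, l) by the rotation [rot 1]; [region] is [None]
   on [l, 1), which the rotation crosses exactly when T is applied to a point of I_B. *)
Definition region (x : R) : option letter :=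
  if Rlt_dec x l then Some (code eps l x) else None.

Definition return_time (c : option letter) : nat :=
  match c with Some LB => 2 | _ => 1 end.

(* [visit x j] is the rotation time of the j-th point of the T-orbit of x. *)
Fixpoint visit (x : R) (j : nat) : nat :=
  match j with
  | O => O
  | S j' => visit x j' + return_time (region (rot (visit x j') x))
  end.

Lemma rot_bounds k x : 0 <= rot k x < 1.
Proof. apply frac_part_bounds. Qed.

Lemma rot_rot a b x : rot a (rot b x) = rot (a + b) x.
Proof.
  unfold rot. rewrite plus_INR.
  replace (frac_part (x - INR b * eps) - INR a * eps) with
    (x - (INR a + INR b) * eps + IZR (- Int_part (x - INR b * eps)))
    by (rewrite opp_IZR; unfold frac_part; ring).
  apply frac_part_plus_IZR.
Qed.

Lemma rot_0 x : 0 <= x < 1 -> rot 0 x = x.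
Proof. intros Hx. unfold rot. simpl. rewrite Rmult_0_l, Rminus_0_r. now apply frac_part_small. Qed.

Lemma rot_1 x : 0 <= x < 1 -> rot 1 x = if Rlt_dec x eps then x - eps + 1 else x - eps.
Proof.
  intros Hx. unfold rot. rewrite Rmult_1_l. destruct (Rlt_dec x eps).
  - apply frac_part_eq with (-1)%Z; simpl; lra.
  - apply frac_part_small. lra.
Qed.

Lemma region_lt_l w : w < l -> region w = Some (code eps l w).
Proof. intros Hw. unfold region. now destruct (Rlt_dec w l). Qed.

Lemma region_eq_lt_eps x y : region x = region y -> (x < eps <-> y < eps).
Proof.
  unfold region, code.
  destruct (Rlt_dec x l), (Rlt_dec y l), (Rlt_dec x (l - 1 + eps)), (Rlt_dec y (l - 1 + eps));
    try destruct (Rlt_dec x eps); try destruct (Rlt_dec y eps);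
    intros H; try discriminate; lra.
Qed.

Lemma region_B_rot_1 w : 0 <= w < 1 -> region w = Some LB -> region (rot 1 w) = None.
Proof.
  intros Hw. unfold region at 1, code.
  destruct (Rlt_dec w l); [|discriminate].
  destruct (Rlt_dec w (l - 1 + eps)); [discriminate|].
  destruct (Rlt_dec w eps); [|discriminate]. intros _.
  rewrite rot_1 by exact Hw. destruct (Rlt_dec w eps); [|contradiction].
  unfold region. destruct (Rlt_dec (w - eps + 1) l); [lra|reflexivity].
Qed.

Lemma T3_rot w : 0 <= w < l -> T3 eps l w = rot (return_time (region w)) w.
Proof.
  intros Hw. rewrite region_lt_l by lra. unfold T3, code, return_time, rot.
  destruct (Rlt_dec w (l - 1 + eps)); [|destruct (Rlt_dec w eps)].
  - symmetry. apply frac_part_eq with (-1)%Z; simpl; lra.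
  - symmetry. apply frac_part_eq with (-1)%Z; simpl; lra.
  - rewrite Rmult_1_l. symmetry. apply frac_part_small. lra.
Qed.

Lemma T3_bounds w : 0 <= w < l -> 0 <= T3 eps l w < l.
Proof.
  intros Hw. unfold T3.
  destruct (Rlt_dec w (l - 1 + eps)); [lra|]. destruct (Rlt_dec w eps); lra.
Qed.

Lemma iter_T3_bounds x j : 0 <= x < l -> 0 <= Nat.iter j (T3 eps l) x < l.
Proof.
  intros Hx. induction j as [|j IH]; [exact Hx|]. now apply T3_bounds.
Qed.

Lemma iter_T3_visit x j : 0 <= x < l -> Nat.iter j (T3 eps l) x = rot (visit x j) x.
Proof.
  intros Hx. induction j as [|j IH]; [simpl; symmetry; apply rot_0; lra|].
  simpl (Nat.iter (S j) _ _). rewrite T3_rot by (now apply iter_T3_bounds).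
  rewrite IH, rot_rot. simpl visit. f_equal. lia.
Qed.

Lemma return_time_bounds c : (1 <= return_time c <= 2)%nat.
Proof. destruct c as [[| |]|]; simpl; lia. Qed.

Lemma visit_bounds x j : (j <= visit x j <= 2 * j)%nat.
Proof.
  induction j as [|j IH]; simpl visit; [lia|].
  assert (H := return_time_bounds (region (rot (visit x j) x))). lia.
Qed.

Lemma visit_lt x j j' : (j < j')%nat -> (visit x j < visit x j')%nat.
Proof.
  induction 1 as [|j' _ IH]; simpl visit;
    [|assert (H' := return_time_bounds (region (rot (visit x j') x)))];
    assert (H := return_time_bounds (region (rot (visit x j) x))); lia.
Qed.

Lemma rot_visited x k : 0 <= x < l -> rot k x < l -> exists i, visit x i = k.
Proof.
  intros Hx.
  assert (Hc : forall n, (exists i, visit x i = n) \/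
     (exists i, (visit x i + 1 = n)%nat /\ region (rot (visit x i) x) = Some LB)).
  { intros n. induction n as [|n [[i Hi]|[i [Hi HB]]]].
    - left. now exists 0%nat.
    - destruct (region (rot n x)) as [[| |]|] eqn:Hr.
      + left. exists (S i). simpl. rewrite Hi, Hr. simpl. lia.
      + right. exists i. rewrite Hi. split; [lia|exact Hr].
      + left. exists (S i). simpl. rewrite Hi, Hr. simpl. lia.
      + left. exists (S i). simpl. rewrite Hi, Hr. simpl. lia.
    - left. exists (S i). simpl. rewrite HB. simpl. lia. }
  intros Hk. destruct (Hc k) as [H|[i [Hi HB]]]; [exact H|].
  apply region_B_rot_1 in HB; [|apply rot_bounds].
  rewrite rot_rot, Nat.add_comm, Hi in HB.
  unfold region in HB. destruct (Rlt_dec (rot k x) l); [discriminate|contradiction].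
Qed.

Lemma visit_agree y z K :
  (forall k, (k < K)%nat -> region (rot k y) = region (rot k z)) ->
  forall j, (visit y j <= K)%nat -> visit z j = visit y j.
Proof.
  intros Hag j. induction j as [|j IH]; intros Hj; [reflexivity|].
  assert (Hs := visit_lt y j (S j) (Nat.lt_succ_diag_r j)).
  simpl visit in *. rewrite IH, (Hag (visit y j)) by lia. reflexivity.
Qed.

Lemma regions_agree_of_visits y z N :
  (forall j, (j < N)%nat -> region (rot (visit y j) y) = region (rot (visit z j) z)) ->
  visit z N = visit y N /\
  forall k, (k < visit y N)%nat -> region (rot k y) = region (rot k z).
Proof.
  induction N as [|N IH]; intros Hag; [split; [reflexivity|simpl; lia]|].
  destruct (IH (fun j Hj => Hag j ltac:(lia))) as [Hv Hc].
  assert (HN := Hag N ltac:(lia)). rewrite Hv in HN.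
  simpl visit. rewrite Hv, <- HN. split; [reflexivity|].
  intros k Hk.
  destruct (Nat.lt_ge_cases k (visit y N)) as [Hl|Hg]; [now apply Hc|].
  destruct (Nat.eq_dec k (visit y N)) as [->|Hne]; [exact HN|].
  destruct (region (rot (visit y N) y)) as [[| |]|] eqn:Ec; simpl in Hk; try lia.
  replace k with (1 + visit y N)%nat by lia. rewrite <- !rot_rot.
  rewrite !region_B_rot_1 by (auto using rot_bounds). reflexivity.
Qed.

(* Points in the same region lie on the same side of eps, where [rot 1] is a translation. *)
Lemma rot_rigid lo hi K : lo <= hi -> 0 <= lo -> hi < 1 ->
  (forall k, (k < K)%nat -> region (rot k lo) = region (rot k hi)) ->
  forall k, (k <= K)%nat -> rot k hi - rot k lo = hi - lo.
Proof.
  intros Hlh Hlo Hhi Hag k. induction k as [|k IH]; intros Hk; [rewrite !rot_0; lra|].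
  assert (IH' := IH ltac:(lia)).
  replace (S k) with (1 + k)%nat by lia. rewrite <- !rot_rot.
  assert (Hs := region_eq_lt_eps _ _ (Hag k ltac:(lia))).
  assert (Hl := rot_bounds k lo). assert (Hh := rot_bounds k hi).
  rewrite !rot_1 by assumption.
  destruct (Rlt_dec (rot k hi) eps), (Rlt_dec (rot k lo) eps); tauto || lra.
Qed.

Lemma no_multiple_between lo hi K : lo < hi -> 0 <= lo -> hi < 1 ->
  (forall k, (k < K)%nat -> region (rot k lo) = region (rot k hi)) ->
  forall (j : nat) (m : Z), (1 <= j <= K)%nat -> ~ (lo < INR j * eps - IZR m < hi).
Proof.
  intros Hlh Hlo Hhi Hag j m Hj Hw.
  set (w := INR j * eps - IZR m) in *.
  set (k := (j - 1)%nat).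
  assert (Hr := rot_rigid lo hi K ltac:(lra) Hlo Hhi Hag k ltac:(unfold k; lia)).
  assert (Hl := rot_bounds k lo). assert (Hh := rot_bounds k hi).
  assert (Hw1 : rot k w = rot k lo + (w - lo)).
  { apply frac_part_eq with (Int_part (lo - INR k * eps)); [|lra].
    unfold rot, frac_part. ring. }
  assert (Hw2 : rot k w = eps).
  { apply frac_part_eq with (- m)%Z; [|lra].
    unfold w, k. rewrite opp_IZR. replace j with (S (j - 1)) at 1 by lia. rewrite S_INR. ring. }
  assert (Hs := region_eq_lt_eps _ _ (Hag k ltac:(unfold k; lia))).
  lra.
Qed.

Lemma code_periodic_regions y p N : 0 <= y < l ->
  (forall j, (j < N)%nat ->
     code eps l (Nat.iter j (T3 eps l) y) = code eps l (Nat.iter (j + p) (T3 eps l) y)) ->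
  forall k, (k < visit y N)%nat -> region (rot k y) = region (rot k (Nat.iter p (T3 eps l) y)).
Proof.
  intros Hy Hper.
  assert (Hz : 0 <= Nat.iter p (T3 eps l) y < l) by now apply iter_T3_bounds.
  apply regions_agree_of_visits. intros j Hj.
  rewrite <- !iter_T3_visit by assumption.
  rewrite !region_lt_l by (now apply iter_T3_bounds).
  rewrite <- Nat.iter_add. f_equal. now apply Hper.
Qed.

Section BoundedIndex.

Variable M : Z.
Hypothesis digits_bounded : forall n, (cf_digit eps n <= M)%Z.

(* If the coding of the T-orbit of y has period p for N steps, then z = T^p y is the
   rotation image [rot kp y] with p <= kp <= 2p, so |z - y| >~ 1/p by bad approximability,
   while no multiple j eps (j <= N) separates y from z, so |z - y| <~ 1/N. *)
Lemma code_period_bound y p N : 0 <= y < l -> (1 <= p)%nat -> (1 <= N)%nat ->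
  (forall j, (j < N)%nat ->
     code eps l (Nat.iter j (T3 eps l) y) = code eps l (Nat.iter (j + p) (T3 eps l) y)) ->
  INR N < 6 * (IZR M + 1) * ((IZR M + 1) * (IZR M + 2)) * INR p.
Proof.
  intros Hy Hp HN Hper.
  assert (Hag := code_periodic_regions y p N Hy Hper).
  set (z := Nat.iter p (T3 eps l) y) in *. set (K := visit y N) in *. set (kp := visit y p).
  assert (HK : (N <= K)%nat) by apply visit_bounds.
  assert (Hkp : (p <= kp <= 2 * p)%nat) by apply visit_bounds.
  assert (Hz : 0 <= z < l) by now apply iter_T3_bounds.
  set (X := Rabs (z - y)).
  assert (HL := badly_approximable M digits_bounded kp (- Int_part (y - INR kp * eps)) ltac:(lia)).
  replace (Rabs (INR kp * eps - IZR (- Int_part (y - INR kp * eps)))) with X in HL.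
  2:{ unfold X, z. rewrite iter_T3_visit by assumption. fold kp.
      unfold rot, frac_part. rewrite opp_IZR, <- Rabs_Ropp. f_equal. ring. }
  assert (HG : X * INR K < 3 * (IZR M + 1)).
  { destruct (Rtotal_order y z) as [Hyz|[Hyz|Hyz]].
    - unfold X. rewrite Rabs_right by lra.
      apply (gap_bound M digits_bounded K y z ltac:(lia) Hyz).
      exact (no_multiple_between y z K Hyz ltac:(lra) ltac:(lra) Hag).
    - unfold X in HL. rewrite Hyz, Rminus_diag, Rabs_R0 in HL. lra.
    - unfold X. rewrite Rabs_left, Ropp_minus_distr by lra.
      apply (gap_bound M digits_bounded K z y ltac:(lia) Hyz).
      apply (no_multiple_between z y K Hyz ltac:(lra) ltac:(lra)).
      intros k Hk. symmetry. now apply Hag. }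
  assert (HM := digit_bound_ge_1 M digits_bounded).
  assert (HX : 0 <= X) by apply Rabs_pos.
  assert (HkpR : INR kp <= 2 * INR p)
    by (replace 2 with (INR 2) by reflexivity; rewrite <- mult_INR; apply le_INR; lia).
  assert (HNK : INR N <= INR K) by (apply le_INR; lia).
  assert (HN0 : 0 <= INR N) by apply pos_INR.
  set (A := (IZR M + 1) * (IZR M + 2)) in *.
  assert (HA : 2 <= A) by (unfold A; nra).
  assert (H1 : 1 < X * A * (2 * INR p)).
  { assert (X * (A * INR kp) <= X * (A * (2 * INR p))) by (apply Rmult_le_compat_l; nra). nra. }
  assert (H2 : X * INR N < 3 * (IZR M + 1)) by nra.
  nra.
Qed.

Lemma power_length_bound x0 w v : 0 <= x0 < l ->
  factor (iet3_word eps l x0) v -> is_power v w ->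
  INR (length v) <= (1 + 6 * (IZR M + 1) * ((IZR M + 1) * (IZR M + 2))) * INR (length w).
Proof.
  intros Hx [i Hv] Hpow.
  assert (Hper := power_factor_periodic _ v w i Hv Hpow).
  destruct Hpow as [Hw [Hpv _]].
  set (p := length w) in *. set (N := length v) in *.
  assert (Hp : (1 <= p)%nat) by (unfold p; destruct w; [congruence|simpl; lia]).
  assert (HM := digit_bound_ge_1 M digits_bounded).
  assert (HpR : 1 <= INR p) by (apply (le_INR 1); lia).
  assert (HC : 0 <= 6 * (IZR M + 1) * ((IZR M + 1) * (IZR M + 2))) by (repeat apply Rmult_le_pos; lra).
  destruct (Nat.eq_dec N p) as [->|HNp]; [nra|].
  assert (HB := code_period_bound (Nat.iter i (T3 eps l) x0) p (N - p)
                  (iter_T3_bounds x0 i Hx) Hp ltac:(lia)).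
  assert (HNN : INR N = INR (N - p) + INR p) by (rewrite <- plus_INR; f_equal; lia).
  enough (INR (N - p) < 6 * (IZR M + 1) * ((IZR M + 1) * (IZR M + 2)) * INR p) by lra.
  apply HB. intros j Hj.
  rewrite <- !iet3_word_add. apply Hper. lia.
Qed.

End BoundedIndex.

Lemma orbit_enters x0 b h : 0 <= x0 < l -> 0 <= b -> b + h <= l -> 0 < h ->
  exists i, b <= Nat.iter i (T3 eps l) x0 < b + h.
Proof.
  intros Hx Hb Hbh Hh.
  destruct (archimed (3 / h)) as [Hup _].
  assert (H3h : 0 < 3 / h) by (apply Rdiv_lt_0_compat; lra).
  assert (Hup0 : (0 < up (3 / h))%Z) by (apply lt_IZR; lra).
  set (n := Z.to_nat (up (3 / h))).
  assert (Hq : 3 / h < IZR (cf_den (S n))).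
  { assert (H := cf_den_ge_index n).
    assert (Hn : Z.of_nat n = up (3 / h)) by (apply Z2Nat.id; lia).
    rewrite Hn in H. apply IZR_le in H. lra. }
  assert (Hqh : 3 < h * IZR (cf_den (S n))).
  { apply (Rmult_lt_compat_l h) in Hq; [|lra]. replace (h * (3 / h)) with 3 in Hq by (field; lra). lra. }
  destruct (multiple_near n (x0 - b - h / 2)) as (j & m & _ & _ & Hjm).
  assert (Hsm : Rabs (INR j * eps - IZR m - (x0 - b - h / 2)) < h / 2).
  { apply (Rmult_lt_reg_r (IZR (cf_den (S n)))); nra. }
  apply Rabs_def2 in Hsm.
  assert (Ht : rot j x0 = x0 - INR j * eps + IZR m)
    by (apply frac_part_eq with (- m)%Z; [rewrite opp_IZR; ring|lra]).
  destruct (rot_visited x0 j Hx ltac:(rewrite Ht; lra)) as [i Hi].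
  exists i. rewrite iter_T3_visit, Hi, Ht by exact Hx. lra.
Qed.

(* The discontinuities of [region], and 1: staying off [1 - g, 1) keeps [rot k] affine
   on windows of length g. *)
Definition boundary (c : nat) : R :=
  match c with O => l - 1 + eps | S O => eps | S (S O) => l | _ => 1 end.

Lemma region_shift x s g : 0 <= s < g ->
  (forall c, (c < 3)%nat -> ~ (boundary c - g < x < boundary c)) ->
  region (x + s) = region x.
Proof.
  intros Hs Hb.
  assert (H0 := Hb 0%nat ltac:(lia)). assert (H1 := Hb 1%nat ltac:(lia)).
  assert (H2 := Hb 2%nat ltac:(lia)). simpl in H0, H1, H2.
  unfold region, code.
  destruct (Rlt_dec (x + s) l), (Rlt_dec x l); try (exfalso; lra); [|reflexivity].
  destruct (Rlt_dec (x + s) (l - 1 + eps)), (Rlt_dec x (l - 1 + eps)); try (exfalso; lra);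
    [reflexivity|].
  destruct (Rlt_dec (x + s) eps), (Rlt_dec x eps); try (exfalso; lra); reflexivity.
Qed.

Lemma rot_dist_ge k x x' g : g <= Rabs (x - x') <= 1 - g -> g <= Rabs (rot k x - rot k x').
Proof.
  intros Hd.
  set (mz := (Int_part (x' - INR k * eps) - Int_part (x - INR k * eps))%Z).
  replace (rot k x - rot k x') with ((x - x') + IZR mz)
    by (unfold rot, frac_part, mz; rewrite minus_IZR; ring).
  destruct (Z.eq_dec mz 0) as [->|Hz]; [rewrite Rplus_0_r; lra|].
  assert (Hm := Rabs_IZR_ge_1 mz Hz).
  assert (Ht := Rabs_triang_inv (IZR mz) (- (x - x'))).
  rewrite Rabs_Ropp in Ht.
  replace (IZR mz - - (x - x')) with (x - x' + IZR mz) in Ht by ring.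
  lra.
Qed.

(* Each of the 4q boundary windows [boundary c - g, boundary c), pulled back by [rot k]
   with k < q, contains at most one of the 4q + 1 points 2g(i + 1), i <= 4q. *)
Lemma exists_boundary_free_window (q : nat) (g : R) : (1 <= q)%nat -> g * (32 * INR q) = 1 ->
  exists a, 2 * g <= a /\ a + g <= 11 / 32 /\
    forall k c, (k < q)%nat -> (c < 4)%nat -> ~ (boundary c - g < rot k a < boundary c).
Proof.
  intros Hq Hg.
  assert (HqR : 1 <= INR q) by (apply (le_INR 1); lia).
  assert (Hg0 : 0 < g) by nra.
  set (cand := fun i : nat => 2 * g * (INR i + 1)).
  assert (HiR : forall i, (i < 4 * q + 1)%nat -> 0 <= INR i <= 4 * INR q).
  { intros i Hi. split; [apply pos_INR|].
    replace 4 with (INR 4) by (simpl; lra). rewrite <- mult_INR. apply le_INR. lia. }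
  set (spoils := fun i j => exists k c, (k < q)%nat /\ (c < 4)%nat /\ j = (4 * k + c)%nat /\
                 boundary c - g < rot k (cand i) < boundary c).
  assert (Hgood : exists i, (i < 4 * q + 1)%nat /\ forall k c, (k < q)%nat -> (c < 4)%nat ->
            ~ (boundary c - g < rot k (cand i) < boundary c)).
  { apply NNPP. intros Hno.
    enough (4 * q + 1 <= 4 * q)%nat by lia.
    apply (pigeonhole_rel (4 * q) (4 * q + 1) spoils).
    - intros i Hi. apply NNPP. intros Hnj. apply Hno. exists i. split; [exact Hi|].
      intros k c Hk Hc Hr. apply Hnj. exists (4 * k + c)%nat. split; [lia|]. now exists k, c.
    - intros i i' j Hi Hi' [k [c [Hk [Hc [Hj Hr]]]]] [k' [c' [Hk' [Hc' [Hj' Hr']]]]].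
      assert (k' = k) by lia. assert (c' = c) by lia. subst k' c'.
      destruct (Nat.eq_dec i i') as [|Hne]; [assumption|exfalso].
      assert (Hd : g <= Rabs (cand i - cand i') <= 1 - g).
      { replace (cand i - cand i') with (2 * g * (INR i - INR i')) by (unfold cand; ring).
        rewrite Rabs_mult, (Rabs_right (2 * g)) by lra.
        assert (H1 : 1 <= Rabs (INR i - INR i'))
          by (rewrite !INR_IZR_INZ, <- minus_IZR; apply Rabs_IZR_ge_1; lia).
        assert (H2 : Rabs (INR i - INR i') <= 4 * INR q)
          by (destruct (HiR i Hi), (HiR i' Hi'); apply Rabs_le; lra).
        nra. }
      assert (Hfar := rot_dist_ge k _ _ g Hd).
      assert (Rabs (rot k (cand i) - rot k (cand i')) < g) by (apply Rabs_def1; lra).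
      lra. }
  destruct Hgood as [i [Hi Hgd]]. exists (cand i).
  destruct (HiR i Hi). unfold cand. repeat split; [nra|nra|exact Hgd].
Qed.

Definition block_translation (pp : nat) (e a g : R) : Prop :=
  forall z, a <= z < a + g ->
    Nat.iter pp (T3 eps l) z = z - e /\
    forall j, (j < pp)%nat ->
      code eps l (Nat.iter j (T3 eps l) z) = code eps l (Nat.iter j (T3 eps l) a).

(* If no boundary window meets the first q rotation images of [a, a + g), these images
   are rigid translates coded alike, and the T-orbit reaches rotation time q after some
   pp steps, simultaneously for all points of [a, a + g). *)
Lemma iter_T3_translation a g e (q : nat) : (1 <= q)%nat -> 0 <= a -> 0 < g -> a + g <= l ->
  (forall k c, (k < q)%nat -> (c < 4)%nat -> ~ (boundary c - g < rot k a < boundary c)) ->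
  (forall z, a <= z < a + g -> rot q z = z - e) -> a - e < l ->
  exists pp, (1 <= pp)%nat /\ block_translation pp e a g.
Proof.
  intros Hq Ha Hg0 Hag Hfree Hrot Hae.
  assert (Hg : forall z k, a <= z < a + g -> (k < q)%nat -> region (rot k z) = region (rot k a)).
  { intros z k Hz Hk.
    assert (Hr := rot_bounds k a).
    assert (Hle : rot k a <= 1 - g) by (assert (H := Hfree k 3%nat Hk ltac:(lia)); simpl in H; lra).
    replace (rot k z) with (rot k a + (z - a)).
    - apply region_shift with g; [lra|]. intros c Hc. apply Hfree; lia.
    - symmetry. apply frac_part_eq with (Int_part (a - INR k * eps)); [|lra].
      unfold rot, frac_part. ring. }
  assert (Ha' : 0 <= a < l) by lra.
  destruct (rot_visited a q Ha' ltac:(rewrite Hrot; lra)) as [pp Hpp].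
  assert (Hpp1 : (1 <= pp)%nat) by (destruct pp; [simpl in Hpp; lia|lia]).
  assert (Hvisit : forall z j, a <= z < a + g -> (j <= pp)%nat -> visit z j = visit a j).
  { intros z j Hz Hj. apply (visit_agree a z q).
    - intros k Hk. symmetry. now apply Hg.
    - destruct (Nat.eq_dec j pp) as [->|]; [lia|].
      assert (H := visit_lt a j pp ltac:(lia)). lia. }
  exists pp. split; [exact Hpp1|]. intros z Hz.
  assert (Hz' : 0 <= z < l) by lra.
  rewrite !iter_T3_visit by assumption. rewrite Hvisit, Hpp by (auto; lia).
  split; [now apply Hrot|]. intros j Hj.
  assert (Hk := visit_lt a j pp Hj). rewrite Hpp in Hk.
  assert (Hreg : region (rot (visit z j) z) = region (rot (visit a j) a))
    by (rewrite Hvisit by (auto; lia); now apply Hg).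
  rewrite <- !iter_T3_visit in Hreg by assumption.
  rewrite !region_lt_l in Hreg by (now apply iter_T3_bounds).
  now injection Hreg.
Qed.

(* The orbit of x0 enters [a, a + g) at a point y with y - m e in [a, a + g) for m <= L,
   so T^(m pp) y = y - m e for m <= L and the coding repeats L + 1 times. *)
Lemma block_translation_power x0 pp e a g L : 0 <= x0 < l -> (1 <= pp)%nat -> 0 <= a -> a + g <= l ->
  Rabs e * (INR L + 1) < g / 2 -> block_translation pp e a g ->
  exists w v, w <> nil /\ factor (iet3_word eps l x0) w /\ factor (iet3_word eps l x0) v /\
    is_power v w /\ INR (length v) / INR (length w) = INR (S L).
Proof.
  intros Hx Hpp Ha Hag HeL Htr.
  set (b := if Rlt_dec e 0 then a else a + g / 2).
  assert (HL0 := pos_INR L). assert (He0 := Rabs_pos e).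
  assert (Hg0 : 0 < g) by nra.
  destruct (orbit_enters x0 b (g / 2) Hx) as [i0 Hi0];
    [unfold b; destruct (Rlt_dec e 0); lra|unfold b; destruct (Rlt_dec e 0); lra|lra|].
  set (y := Nat.iter i0 (T3 eps l) x0) in *.
  assert (Hin : forall m, (m <= L)%nat -> a <= y - INR m * e < a + g).
  { intros m Hm. assert (HmL : INR m <= INR L) by (apply le_INR; auto).
    assert (Hm0 := pos_INR m).
    assert (HmE : INR m * Rabs e < g / 2) by nra.
    unfold b in Hi0. destruct (Rlt_dec e 0).
    - rewrite Rabs_left in HmE by auto. nra.
    - rewrite Rabs_right in HmE by lra. nra. }
  assert (Hper : forall m, (m <= L)%nat -> Nat.iter (m * pp) (T3 eps l) y = y - INR m * e).
  { induction m as [|m IH]; intros Hm; [simpl; ring|].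
    replace (S m * pp)%nat with (pp + m * pp)%nat by lia.
    rewrite Nat.iter_add, IH by lia. rewrite (proj1 (Htr _ (Hin m ltac:(lia)))), S_INR. ring. }
  apply (periodic_block_power _ i0 pp L Hpp).
  intros m j Hm Hj. rewrite !iet3_word_add. fold y.
  rewrite (Nat.add_comm (m * pp) j), Nat.iter_add, Hper by exact Hm.
  rewrite (proj2 (Htr _ (Hin m Hm)) j Hj).
  assert (Hy : a <= y < a + g) by (assert (H := Hin 0%nat ltac:(lia)); simpl in H; lra).
  symmetry. exact (proj2 (Htr y Hy) j Hj).
Qed.

Lemma large_digit_power x0 L n : 0 <= x0 < l ->
  (64 * (Z.of_nat L + 1) <= cf_digit eps (S n))%Z ->
  exists w v, w <> nil /\ factor (iet3_word eps l x0) w /\ factor (iet3_word eps l x0) v /\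
    is_power v w /\ INR (length v) / INR (length w) = INR (S L).
Proof.
  intros Hx Hdig.
  set (q := Z.to_nat (cf_den (S n))). set (e := cf_err n).
  assert (Hq1 := cf_den_pos n).
  assert (HqR : INR q = IZR (cf_den (S n))) by (unfold q; rewrite INR_IZR_INZ, Z2Nat.id by lia; reflexivity).
  assert (HqR1 : 1 <= INR q) by (rewrite HqR; apply IZR_le; lia).
  assert (HeL : Rabs e * (64 * (INR L + 1) * INR q) < 1).
  { assert (H2 : (64 * (Z.of_nat L + 1) * cf_den (S n) <= cf_den (S (S n)))%Z)
      by (rewrite cf_den_SS; assert (H := cf_den_bounds n); nia).
    apply IZR_le in H2. rewrite !mult_IZR, plus_IZR, <- INR_IZR_INZ, <- HqR in H2.
    assert (Herr := cf_err_lt n). fold e in Herr.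
    assert (Rabs e * (64 * (INR L + 1) * INR q) <= Rabs e * IZR (cf_den (S (S n))))
      by (apply Rmult_le_compat_l; [apply Rabs_pos|exact H2]).
    lra. }
  set (g := / (32 * INR q)).
  assert (Hg : g * (32 * INR q) = 1) by (unfold g; field; lra).
  assert (Hg0 : 0 < g) by (unfold g; apply Rinv_0_lt_compat; lra).
  assert (HL0 := pos_INR L).
  assert (HeLg : Rabs e * (INR L + 1) < g / 2) by nra.
  assert (Heg : Rabs e < g / 2) by nra.
  destruct (exists_boundary_free_window q g ltac:(lia) Hg) as (a & Ha1 & Ha2 & Hfree).
  assert (Hl2 : 1 / 2 < l) by lra.
  apply Rabs_def2 in Heg.
  destruct (iter_T3_translation a g e q ltac:(lia) ltac:(lra) Hg0 ltac:(lra) Hfree) as [pp [Hpp Htr]].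
  - intros z Hz. apply frac_part_eq with (- cf_num (S n))%Z; [|lra].
    rewrite opp_IZR, HqR. unfold e, cf_err. ring.
  - lra.
  - exact (block_translation_power x0 pp e a g L Hx Hpp ltac:(lra) ltac:(lra) HeLg Htr).
Qed.

End InducedMap.

End IrrationalSlope.

Lemma unbounded_digits_large eps (B : Z) :
  ~ (exists M : Z, forall n : nat, (cf_digit eps n <= M)%Z) -> (0 <= B)%Z ->
  exists n, (B <= cf_digit eps (S n))%Z.
Proof.
  intros Hunb HB. apply NNPP. intros Hsmall. apply Hunb. exists B. intros [|n]; [simpl; lia|].
  destruct (Z_le_gt_dec (cf_digit eps (S n)) B) as [H|H]; [exact H|].
  exfalso. apply Hsmall. exists n. lia.
Qed.

Theorem theorem4 (eps l x0 : R) :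
  0 < eps < 1 -> irrational eps ->
  Rmax eps (1 - eps) < l -> l < 1 ->
  0 <= x0 < l ->
  (Rbar_lt (ind_word (iet3_word eps l x0)) p_infty <->
   exists M : Z, forall n : nat, (cf_digit eps n <= M)%Z).
Proof.
  intros He Hi Hmax Hl Hx.
  assert (Hel : eps < l) by (eapply Rle_lt_trans; [apply Rmax_l|exact Hmax]).
  assert (Hel' : 1 - eps < l) by (eapply Rle_lt_trans; [apply Rmax_r|exact Hmax]).
  split.
  - intros Hfin. apply NNPP. intros Hunb.
    rewrite ind_word_infinite in Hfin; [exact Hfin|].
    intros L.
    destruct (unbounded_digits_large eps (64 * (Z.of_nat L + 1)) Hunb ltac:(lia)) as [n Hn].
    exact (large_digit_power eps He Hi l Hel Hel' Hl x0 L n Hx Hn).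
  - intros [M HM]. apply (ind_word_finite _ (1 + 6 * (IZR M + 1) * ((IZR M + 1) * (IZR M + 2)))).
    intros w v _ Hv Hp. exact (power_length_bound eps He Hi l Hel Hel' Hl M HM x0 w v Hx Hv Hp).
Qed.
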